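(* Let $n\ge2$ and let $\Sigma=\mathbb{R}^n\subset\mathbb{R}^{n+1}$ be a hyperplane through the origin. Then the region $$\Big\{\vec x\in\Sigma:\ |\vec x|>2\sqrt{(n+2)\Big(\sqrt{\tfrac{3n+2}{n+2}}-1\Big)}\Big\}$$ is stable.
   Context: Stability operator on a self-shrinker: $Lf=\Delta f-\tfrac12\langle\vec x,\nabla f\rangle+(|A|^2+\tfrac12)f$. A region $\Omega$ is stable if there exists a function $u$ with $Lu=0$ and $u>0$ on $\Omega$. *)

From Stdlib Require Import Reals Lra.
Open Scope R_scope.

(* Points of R^N are modelled as nat -> R; a point of R^n is one whose
   coordinates of index >= n vanish.  The hyperplane Sigma = R^n x {0}
   inside R^{n+1} is identified with R^n (its intrinsic geometry). *)
Definition point := nat -> R.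

Definition in_Rn (n : nat) (x : point) : Prop := forall i, (n <= i)%nat -> x i = 0.

Fixpoint sum_lt (n : nat) (f : nat -> R) : R :=
  match n with O => 0 | S m => sum_lt m f + f m end.

Definition inner (n : nat) (x y : point) : R := sum_lt n (fun i => x i * y i).
Definition norm (n : nat) (x : point) : R := sqrt (inner n x x).

Definition shift (x : point) (j : nat) (t : R) : point :=
  fun i => if Nat.eqb i j then x i + t else x i.

Definition has_partial (f : point -> R) (j : nat) (x : point) (l : R) : Prop :=
  derivable_pt_lim (fun t => f (shift x j t)) 0 l.

Definition cont_at (n : nat) (f : point -> R) (x : point) : Prop :=
  forall eps, 0 < eps -> exists delta, 0 < delta /\
    forall y, in_Rn n y ->
      norm n (fun i => y i - x i) < delta -> Rabs (f y - f x) < eps.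

Definition C2_on (n : nat) (Omega : point -> Prop) (u : point -> R)
    (Du : nat -> point -> R) (H : nat -> nat -> point -> R) : Prop :=
  forall x, in_Rn n x -> Omega x ->
    (forall j, (j < n)%nat -> has_partial u j x (Du j x)) /\
    (forall i j, (i < n)%nat -> (j < n)%nat -> has_partial (Du i) j x (H i j x)) /\
    cont_at n u x /\
    (forall i, (i < n)%nat -> cont_at n (Du i) x) /\
    (forall i j, (i < n)%nat -> (j < n)%nat -> cont_at n (H i j) x).

(* Stability operator L f = Delta f - 1/2 <x, grad f> + (|A|^2 + 1/2) f,
   written in terms of gradient Df and Hessian Hf; A2 is |A|^2. *)
Definition Lop (n : nat) (A2 : point -> R) (f : point -> R)
    (Df : nat -> point -> R) (Hf : nat -> nat -> point -> R) (x : point) : R :=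
  sum_lt n (fun i => Hf i i x)
  - / 2 * sum_lt n (fun i => x i * Df i x)
  + (A2 x + / 2) * f x.

(* A region Omega of a self-shrinker (here an n-dimensional flat one, so its
   points are those of R^n) is stable if there is u with L u = 0 and u > 0
   on Omega. *)
Definition stable_region (n : nat) (A2 : point -> R) (Omega : point -> Prop) : Prop :=
  exists (u : point -> R) (Du : nat -> point -> R) (H : nat -> nat -> point -> R),
    C2_on n Omega u Du H /\
    forall x, in_Rn n x -> Omega x -> Lop n A2 u Du H x = 0 /\ 0 < u x.

(* We look for a radial Jacobi field u(x) = F(|x|^2).  Writing r = |x|^2 one
   has Delta u = 4 r F'' + 2 n F' and <x, grad u> = 2 r F', so L u = 0 becomes
   the ODE  4 z F'' + (2n - z) F' + F/2 = 0.  It is solved by the power series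
   F(z) = sum_k c_k z^k with c_0 = -n and
   c_{k+1} = (k - 1/2) c_k / ((k+1)(4k + 2n)),
   which has infinite radius of convergence (ratio test).  Every c_k with
   k >= 1 is positive, hence for z >= 0 the series dominates its quadratic
   truncation  -n + z/4 + z^2/(32(n+2)), whose positive root is exactly
   4 (n+2)(sqrt((3n+2)/(n+2)) - 1).  So u > 0 beyond the stated radius. *)
From Stdlib Require Import Reals Lra Lia Psatz.
From Coquelicot Require Import Coquelicot.
Open Scope R_scope.

Lemma sum_lt_ext m f g :
  (forall i, (i < m)%nat -> f i = g i) -> sum_lt m f = sum_lt m g.
Proof.
  induction m as [|m IH]; intros H; simpl; [reflexivity|].
  rewrite IH by (intros; apply H; lia). rewrite H by lia. reflexivity.
Qed.

Lemma sum_lt_affine m c d f :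
  sum_lt m (fun i => c + d * f i) = INR m * c + d * sum_lt m f.
Proof. induction m as [|m IH]; simpl sum_lt; [simpl; ring|]. rewrite IH, S_INR. ring. Qed.

Lemma sum_lt_nonneg m f : (forall k, 0 <= f k) -> 0 <= sum_lt m f.
Proof. intros H; induction m; simpl; [lra|]. specialize (H m). lra. Qed.

Lemma sum_lt_ge_term m f i :
  (forall k, 0 <= f k) -> (i < m)%nat -> f i <= sum_lt m f.
Proof.
  intros H; induction m as [|m IH]; intros Hi; [lia|]. simpl.
  destruct (Nat.eq_dec i m) as [->|Hne].
  - pose proof (sum_lt_nonneg m f H). lra.
  - specialize (IH ltac:(lia)). specialize (H m). lra.
Qed.

Lemma inner_nonneg m x : 0 <= inner m x x.
Proof. apply sum_lt_nonneg. intros k. apply Rle_0_sqr. Qed.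

Lemma coord_le_norm n (z : point) i : (i < n)%nat -> Rabs (z i) <= norm n z.
Proof.
  intros Hi. unfold norm, inner. rewrite <- sqrt_Rsqr_abs.
  apply sqrt_le_1_alt. unfold Rsqr.
  apply (sum_lt_ge_term n (fun k => z k * z k)); [|exact Hi]. intros k. apply Rle_0_sqr.
Qed.

Lemma inner_shift m x j t :
  inner m (shift x j t) (shift x j t) =
  inner m x x + (if Nat.ltb j m then 2 * t * x j + t * t else 0).
Proof.
  unfold inner. induction m as [|m IH]; simpl; [lra|].
  rewrite IH. unfold shift.
  destruct (Nat.eqb m j) eqn:E.
  - apply Nat.eqb_eq in E. subst m.
    rewrite Nat.ltb_irrefl. replace (Nat.ltb j (S j)) with true
      by (symmetry; apply Nat.ltb_lt; lia). ring.
  - apply Nat.eqb_neq in E. destruct (Nat.ltb j m) eqn:E1.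
    + apply Nat.ltb_lt in E1.
      replace (Nat.ltb j (S m)) with true by (symmetry; apply Nat.ltb_lt; lia). ring.
    + apply Nat.ltb_ge in E1.
      replace (Nat.ltb j (S m)) with false by (symmetry; apply Nat.ltb_ge; lia). ring.
Qed.

Lemma shift_coord x j t i :
  shift x j t i = x i + (if Nat.eqb i j then 1 else 0) * t.
Proof. unfold shift. destruct (Nat.eqb i j); ring. Qed.

Lemma cont_ext n f g x : (forall y, f y = g y) -> cont_at n f x -> cont_at n g x.
Proof.
  intros E H eps Heps. destruct (H eps Heps) as [d [Hd Hy]].
  exists d; split; [exact Hd|]. intros y Hy1 Hy2. rewrite <- !E. auto.
Qed.

Lemma cont_const n c x : cont_at n (fun _ => c) x.
Proof. intros eps He. exists 1; split; [lra|]. intros. rewrite Rminus_diag, Rabs_R0. lra. Qed.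

Lemma cont_coord n i x : (i < n)%nat -> cont_at n (fun y => y i) x.
Proof.
  intros Hi eps He. exists eps; split; [exact He|]. intros y _ Hy.
  eapply Rle_lt_trans; [|exact Hy]. exact (coord_le_norm n (fun k => y k - x k) i Hi).
Qed.

Lemma cont_plus n f g x :
  cont_at n f x -> cont_at n g x -> cont_at n (fun y => f y + g y) x.
Proof.
  intros Hf Hg eps He.
  destruct (Hf (eps/2) ltac:(lra)) as [d1 [Hd1 H1]].
  destruct (Hg (eps/2) ltac:(lra)) as [d2 [Hd2 H2]].
  exists (Rmin d1 d2); split; [apply Rmin_pos; assumption|].
  intros y Hy Hn.
  assert (A1 := H1 y Hy ltac:(eapply Rlt_le_trans; [exact Hn| apply Rmin_l])).
  assert (A2 := H2 y Hy ltac:(eapply Rlt_le_trans; [exact Hn| apply Rmin_r])).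
  replace (f y + g y - (f x + g x)) with ((f y - f x) + (g y - g x)) by ring.
  eapply Rle_lt_trans; [apply Rabs_triang|]. lra.
Qed.

Lemma cont_comp n f h x :
  cont_at n f x -> continuity_pt h (f x) -> cont_at n (fun y => h (f y)) x.
Proof.
  intros Hf Hh eps He.
  destruct (Hh eps He) as [d [Hd Hd2]].
  destruct (Hf d Hd) as [d' [Hd' H']].
  exists d'; split; [exact Hd'|]. intros y Hy Hn.
  destruct (Req_dec (f y) (f x)) as [E|E].
  - rewrite E, Rminus_diag, Rabs_R0. lra.
  - apply (Hd2 (f y)). split; [split; [exact I | auto] | apply H'; assumption].
Qed.

Lemma continuity_pt_of_derivable_pt_lim (h : R -> R) z l :
  derivable_pt_lim h z l -> continuity_pt h z.
Proof. intros H. exact (derivable_continuous_pt h z (exist _ l H)). Qed.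

(* Products follow from sums and squares by polarization:
   f g = (f + g)^2 / 4 - (f + (-g))^2 / 4. *)
Lemma cont_mult n f g x :
  cont_at n f x -> cont_at n g x -> cont_at n (fun y => f y * g y) x.
Proof.
  intros Hf Hg.
  set (sq4 := fun v : R => v * v / 4).
  assert (Hsq : forall z, continuity_pt sq4 z).
  { intros z. apply (continuity_pt_of_derivable_pt_lim _ _ (2 * z / 4)).
    apply is_derive_Reals. unfold sq4. auto_derive; [exact I | field]. }
  assert (Hopp : forall z, continuity_pt Ropp z).
  { intros z. apply (continuity_pt_of_derivable_pt_lim _ _ (-1)).
    apply is_derive_Reals. auto_derive; [exact I | ring]. }
  apply cont_ext with
    (f := fun y => sq4 (f y + g y) + Ropp (sq4 (f y + Ropp (g y)))).
  { intros y. unfold sq4. field. }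
  apply cont_plus.
  - apply (cont_comp n (fun y => f y + g y)); [apply cont_plus; assumption | apply Hsq].
  - apply (cont_comp n (fun y => sq4 (f y + Ropp (g y)))); [|apply Hopp].
    apply (cont_comp n (fun y => f y + Ropp (g y))); [|apply Hsq].
    apply cont_plus; [assumption|]. apply (cont_comp n g); [assumption | apply Hopp].
Qed.

Lemma cont_inner n x : cont_at n (fun y => inner n y y) x.
Proof.
  unfold inner.
  assert (H : forall m, (m <= n)%nat ->
            cont_at n (fun y => sum_lt m (fun i => y i * y i)) x).
  { induction m as [|m IH]; intros Hm; simpl.
    - apply cont_const.
    - apply cont_plus; [apply IH; lia|]. apply cont_mult; apply cont_coord; lia. }
  apply H. lia.
Qed.

(** * Radial functions u(x) = G(|x|^2) *)

(* Along the j-th axis |x|^2 moves as t |-> r + 2 t x_j + t^2, with derivative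
   2 x_j at t = 0; this is the chain rule along that path. *)
Lemma is_derive_along_axis (h : R -> R) r a l :
  derivable_pt_lim h r l -> is_derive (fun t => h (r + 2 * t * a + t * t)) 0 (2 * a * l).
Proof.
  intros Hh.
  assert (Hpath : is_derive (fun t => r + 2 * t * a + t * t) 0 (2 * a))
    by (auto_derive; [exact I | ring]).
  assert (Hh' : is_derive h ((fun t => r + 2 * t * a + t * t) 0) l).
  { cbv beta. replace (r + 2 * 0 * a + 0 * 0) with r by ring.
    apply is_derive_Reals. exact Hh. }
  exact (is_derive_comp h _ 0 l (2 * a) Hh' Hpath).
Qed.

Section Radial.
Variable n : nat.
Variables G G1 G2 : R -> R.

Definition radial (x : point) : R := G (inner n x x).
Definition radial_grad (j : nat) (x : point) : R := 2 * x j * G1 (inner n x x).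
Definition radial_hess (i j : nat) (x : point) : R :=
  2 * (if Nat.eqb i j then 1 else 0) * G1 (inner n x x)
  + 2 * x i * (2 * x j * G2 (inner n x x)).

Lemma Lop_radial A2 x :
  let r := inner n x x in
  Lop n A2 radial radial_grad radial_hess x =
  4 * r * G2 r + 2 * INR n * G1 r - r * G1 r + (A2 x + / 2) * G r.
Proof.
  intros r. unfold Lop, radial, radial_grad, radial_hess. fold r.
  rewrite (sum_lt_ext n _ (fun i => 2 * G1 r + (4 * G2 r) * (x i * x i)))
    by (intros i _; rewrite Nat.eqb_refl; ring).
  rewrite (sum_lt_ext n (fun i => x i * (2 * x i * G1 r))
             (fun i => 0 + (2 * G1 r) * (x i * x i))) by (intros; ring).
  rewrite !sum_lt_affine. change (sum_lt n (fun i => x i * x i)) with r. field.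
Qed.

Hypothesis G_deriv : forall z, derivable_pt_lim G z (G1 z).
Hypothesis G1_deriv : forall z, derivable_pt_lim G1 z (G2 z).
Hypothesis G2_cont : forall z, continuity_pt G2 z.

Lemma radial_partial x j :
  (j < n)%nat -> has_partial radial j x (radial_grad j x).
Proof.
  intros Hj. unfold has_partial, radial, radial_grad. apply is_derive_Reals.
  apply is_derive_ext with (f := fun t => G (inner n x x + 2 * t * x j + t * t)).
  { intros t. rewrite inner_shift, (proj2 (Nat.ltb_lt j n) Hj). f_equal. ring. }
  exact (is_derive_along_axis G _ _ _ (G_deriv _)).
Qed.

Lemma radial_grad_partial x i j :
  (j < n)%nat -> has_partial (radial_grad i) j x (radial_hess i j x).
Proof.
  intros Hj. unfold has_partial, radial_grad, radial_hess. apply is_derive_Reals.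
  set (d := if Nat.eqb i j then 1 else 0).
  apply is_derive_ext with (f := fun t => 2 * (x i + d * t)
                                    * G1 (inner n x x + 2 * t * x j + t * t)).
  { intros t. rewrite inner_shift, shift_coord, (proj2 (Nat.ltb_lt j n) Hj).
    f_equal. f_equal. ring. }
  assert (Hlin : is_derive (fun t => 2 * (x i + d * t)) 0 (2 * d))
    by (auto_derive; [exact I | ring]).
  pose proof (is_derive_mult _ _ 0 _ _ Hlin
                (is_derive_along_axis G1 _ (x j) _ (G1_deriv (inner n x x)))
                Rmult_comm) as HD.
  change mult with Rmult in HD. change plus with Rplus in HD. cbv beta in HD.
  replace (inner n x x + 2 * 0 * x j + 0 * 0) with (inner n x x) in HD by ring.
  replace (2 * d * G1 (inner n x x) + 2 * x i * (2 * x j * G2 (inner n x x)))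
    with (2 * d * G1 (inner n x x) + 2 * (x i + d * 0) * (2 * x j * G2 (inner n x x)))
    by ring.
  exact HD.
Qed.

Lemma cont_radial_comp (h : R -> R) x :
  (forall z, continuity_pt h z) -> cont_at n (fun y => h (inner n y y)) x.
Proof. intros Hh. apply cont_comp; [apply cont_inner | apply Hh]. Qed.

Lemma radial_C2 (Omega : point -> Prop) :
  C2_on n Omega radial radial_grad radial_hess.
Proof.
  assert (cG : forall z, continuity_pt G z)
    by (intros z; exact (continuity_pt_of_derivable_pt_lim _ _ _ (G_deriv z))).
  assert (cG1 : forall z, continuity_pt G1 z)
    by (intros z; exact (continuity_pt_of_derivable_pt_lim _ _ _ (G1_deriv z))).
  intros x _ _. split; [|split; [|split; [|split]]].
  - intros j Hj. exact (radial_partial x j Hj).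
  - intros i j _ Hj. exact (radial_grad_partial x i j Hj).
  - exact (cont_radial_comp G x cG).
  - intros i Hi. unfold radial_grad.
    apply cont_mult; [apply cont_mult; [apply cont_const | apply cont_coord; exact Hi]|].
    exact (cont_radial_comp G1 x cG1).
  - intros i j Hi Hj. unfold radial_hess. apply cont_plus.
    + apply cont_mult; [apply cont_const | exact (cont_radial_comp G1 x cG1)].
    + apply cont_mult; [apply cont_mult; [apply cont_const | apply cont_coord; exact Hi]|].
      apply cont_mult; [apply cont_mult; [apply cont_const | apply cont_coord; exact Hj]|].
      exact (cont_radial_comp G2 x G2_cont).
Qed.

End Radial.

(** * Entire power series *)

Lemma PSeries_derivable_everywhere (a : nat -> R) z :
  CV_radius a = p_infty -> derivable_pt_lim (PSeries a) z (PSeries (PS_derive a) z).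
Proof. intros Ha. apply is_derive_Reals, is_derive_PSeries. rewrite Ha. exact I. Qed.

Lemma PSeries_nonneg (d : nat -> R) z : 0 <= z -> (forall k, 0 <= d k) ->
  Rbar_lt (Rabs z) (CV_radius d) -> 0 <= PSeries d z.
Proof.
  intros hz hd hr. rewrite <- (PSeries_const_0 z).
  apply Series_le.
  - intros k. change scal with Rmult. change pow_n with pow. simpl.
    rewrite Rmult_0_l. split; [lra|]. apply Rmult_le_pos; [apply hd | apply pow_le; lra].
  - eapply ex_series_ext; [|apply (CV_radius_inside d z hr)].
    intros k. simpl. change scal with Rmult. change pow_n with pow. simpl. apply Rmult_comm.
Qed.

(** * The radial Jacobi field *)

Section JacobiSeries.
Variable n : nat.
Hypothesis hn : (1 <= n)%nat.

(* Coefficients of the power-series solution of 4 z F'' + (2n - z) F' + F/2 = 0. *)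
Fixpoint coef (k : nat) : R :=
  match k with
  | O => - INR n
  | S k => (INR k - / 2) * coef k / ((INR k + 1) * (4 * INR k + 2 * INR n))
  end.

(* Used implicitly by the arithmetic tactics below to keep denominators positive. *)
Let n_ge1 : 1 <= INR n.
Proof. apply (le_INR 1). exact hn. Qed.

Lemma coef_pos k : 0 < coef (S k).
Proof.
  induction k as [|k IH].
  - simpl coef. replace (INR 0) with 0 by reflexivity.
    apply Rdiv_lt_0_compat; nra.
  - change (coef (S (S k))) with ((INR (S k) - / 2) * coef (S k)
                                   / ((INR (S k) + 1) * (4 * INR (S k) + 2 * INR n))).
    assert (1 <= INR (S k)) by (apply (le_INR 1); lia).
    apply Rdiv_lt_0_compat; nra.
Qed.

Lemma coef_neq0 k : coef k <> 0.
Proof. destruct k; [simpl; lra | apply Rgt_not_eq, coef_pos]. Qed.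

Lemma coef1 : coef 1 = / 4.
Proof. simpl. field. lra. Qed.

Lemma coef2 : coef 2 = / (32 * (INR n + 2)).
Proof. simpl. field. lra. Qed.

(* Ratio test: |c_{k+1} / c_k| <= 1/(k+1) -> 0, so the radius is infinite. *)
Lemma coef_ratio_bound k : Rabs (coef (S k) / coef k) <= / (INR k + 1).
Proof.
  assert (Hk : 0 <= INR k) by apply pos_INR.
  assert (Hc := coef_neq0 k).
  change (coef (S k)) with
    ((INR k - / 2) * coef k / ((INR k + 1) * (4 * INR k + 2 * INR n))).
  replace ((INR k - / 2) * coef k / ((INR k + 1) * (4 * INR k + 2 * INR n)) / coef k)
    with ((INR k - / 2) / (4 * INR k + 2 * INR n) * / (INR k + 1)) by (field; lra).
  rewrite Rabs_mult, (Rabs_right (/ (INR k + 1))) by (left; apply Rinv_0_lt_compat; lra).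
  apply Rle_trans with (1 * / (INR k + 1)); [|lra].
  apply Rmult_le_compat_r; [left; apply Rinv_0_lt_compat; lra|].
  rewrite Rabs_div by lra. rewrite (Rabs_right (4 * INR k + 2 * INR n)) by lra.
  apply Rle_div_l; [lra|]. apply Rabs_le. lra.
Qed.

Lemma coef_radius : CV_radius coef = p_infty.
Proof.
  apply CV_radius_infinite_DAlembert; [exact coef_neq0|].
  apply is_lim_seq_le_le with (u := fun _ => 0) (w := fun k => / (INR k + 1)).
  - intros k. split; [apply Rabs_pos | apply coef_ratio_bound].
  - apply is_lim_seq_const.
  - replace (Finite 0) with (Rbar_inv p_infty) by reflexivity.
    apply is_lim_seq_inv; [|discriminate].
    eapply is_lim_seq_plus; [apply is_lim_seq_INR | apply is_lim_seq_const | reflexivity].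
Qed.

Definition F (z : R) := PSeries coef z.
Definition F1 (z : R) := PSeries (PS_derive coef) z.
Definition F2 (z : R) := PSeries (PS_derive (PS_derive coef)) z.

Lemma F_deriv z : derivable_pt_lim F z (F1 z).
Proof. exact (PSeries_derivable_everywhere coef z coef_radius). Qed.

Lemma F1_deriv z : derivable_pt_lim F1 z (F2 z).
Proof.
  apply PSeries_derivable_everywhere. rewrite CV_radius_derive. exact coef_radius.
Qed.

Lemma F2_cont z : continuity_pt F2 z.
Proof.
  eapply continuity_pt_of_derivable_pt_lim, PSeries_derivable_everywhere.
  rewrite !CV_radius_derive. exact coef_radius.
Qed.

(* F solves the radial Jacobi equation: the coefficient of z^k in
   4 z F'' + 2n F' - z F' + F/2 is (k+1)(4k+2n) c_{k+1} - (k - 1/2) c_k = 0. *)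
Lemma F_ode z : 4 * z * F2 z + 2 * INR n * F1 z - z * F1 z + F z / 2 = 0.
Proof.
  set (a := coef). set (a1 := PS_derive a). set (a2 := PS_derive a1).
  assert (rad : forall d, CV_radius d = p_infty -> Rbar_lt (Rabs z) (CV_radius d))
    by (intros d e; rewrite e; exact I).
  assert (E0 : is_pseries a z (F z))
    by (apply PSeries_correct, CV_radius_inside, rad, coef_radius).
  assert (E1 : is_pseries a1 z (F1 z)).
  { apply PSeries_correct, CV_radius_inside, rad.
    unfold a1. rewrite CV_radius_derive. exact coef_radius. }
  assert (E2 : is_pseries a2 z (F2 z)).
  { apply PSeries_correct, CV_radius_inside, rad.
    unfold a2, a1. rewrite !CV_radius_derive. exact coef_radius. }
  pose proof (is_pseries_scal 4 _ z _ (Rmult_comm z 4) (is_pseries_incr_1 _ _ _ E2)) as T1.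
  pose proof (is_pseries_scal (2 * INR n) _ z _ (Rmult_comm _ _) E1) as T2.
  pose proof (is_pseries_scal (-1) _ z _ (Rmult_comm _ _) (is_pseries_incr_1 _ _ _ E1)) as T3.
  pose proof (is_pseries_scal (/ 2) _ z _ (Rmult_comm _ _) E0) as T4.
  pose proof (is_pseries_plus _ _ _ _ _
                (is_pseries_plus _ _ _ _ _ T1 (is_pseries_plus _ _ _ _ _ T2 T3)) T4) as Ec.
  apply is_pseries_unique in Ec.
  change plus with Rplus in Ec. change scal with Rmult in Ec.
  rewrite (PSeries_ext _ (fun _ => 0)), PSeries_const_0 in Ec; [lra|].
  intros k. unfold PS_plus, PS_scal, PS_incr_1, a2, a1, PS_derive.
  change plus with Rplus. change scal with Rmult. change mult with Rmult.
  destruct k as [|m].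
  - change zero with 0. unfold a. simpl coef. rewrite !S_INR. simpl INR. field. lra.
  - unfold a. change (coef (S (S m))) with ((INR (S m) - / 2) * coef (S m)
                                    / ((INR (S m) + 1) * (4 * INR (S m) + 2 * INR n))).
    rewrite !S_INR. assert (0 <= INR m) by apply pos_INR. field. lra.
Qed.

(* Since c_k > 0 for k >= 3, F dominates its quadratic truncation on [0, oo). *)
Lemma F_ge_quadratic z : 0 <= z -> - INR n + z * (/ 4 + z * / (32 * (INR n + 2))) <= F z.
Proof.
  intros hz. rewrite <- coef1, <- coef2. change (- INR n) with (coef 0). unfold F.
  assert (rad : forall d, CV_radius d = p_infty -> Rbar_lt (Rabs z) (CV_radius d))
    by (intros d e; rewrite e; exact I).
  rewrite PSeries_decr_1 by (apply CV_radius_inside, rad, coef_radius).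
  rewrite PSeries_decr_1 by (apply CV_radius_inside, rad;
                             rewrite CV_radius_decr_1; exact coef_radius).
  rewrite PSeries_decr_1 by (apply CV_radius_inside, rad;
                             rewrite !CV_radius_decr_1; exact coef_radius).
  change (PS_decr_1 (PS_decr_1 coef) 0) with (coef 2).
  change (PS_decr_1 coef 0) with (coef 1).
  set (P := PSeries (PS_decr_1 (PS_decr_1 (PS_decr_1 coef))) z).
  assert (HP : 0 <= P).
  { apply PSeries_nonneg; [exact hz | |].
    - intros k. left. apply coef_pos.
    - apply rad. rewrite !CV_radius_decr_1. exact coef_radius. }
  assert (0 <= z * (z * (z * P))) by (repeat apply Rmult_le_pos; lra).
  lra.
Qed.

End JacobiSeries.

(** * The positivity threshold *)

(* The threshold radius is well defined: (3N+2)/(N+2) >= 1 for N >= 0. *)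
Lemma sqrt_ratio_ge1 (N : R) : 0 <= N -> 1 <= sqrt ((3 * N + 2) / (N + 2)).
Proof. intros HN. rewrite <- sqrt_1. apply sqrt_le_1_alt, Rle_div_r; lra. Qed.

(* The quadratic -N + z/4 + z^2/(32(N+2)) vanishes at
   z0 = 4 (N+2)(sqrt((3N+2)/(N+2)) - 1) >= 0 and is positive beyond it. *)
Lemma quadratic_pos_beyond_root (N z : R) : 0 <= N ->
  4 * ((N + 2) * (sqrt ((3 * N + 2) / (N + 2)) - 1)) < z ->
  0 < - N + z * (/ 4 + z * / (32 * (N + 2))).
Proof.
  intros HN Hz.
  set (s := sqrt ((3 * N + 2) / (N + 2))) in Hz.
  assert (Hs2 : s * s * (N + 2) = 3 * N + 2).
  { unfold s. rewrite sqrt_sqrt by (apply Rdiv_le_0_compat; lra). field. lra. }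
  assert (Hs1 : 1 <= s) by exact (sqrt_ratio_ge1 N HN).
  set (z0 := 4 * ((N + 2) * (s - 1))) in Hz.
  assert (Hz0 : 0 <= z0) by (unfold z0; nra).
  assert (Hroot : - N + z0 * (/ 4 + z0 * / (32 * (N + 2))) = 0).
  { unfold z0. field_simplify; [|lra].
    replace (64 * N * s ^ 2 - 192 * N + 128 * s ^ 2 - 128)
      with (64 * (s * s * (N + 2)) - 192 * N - 128) by ring.
    rewrite Hs2. field. }
  set (c := / (32 * (N + 2))) in *.
  assert (Hc : 0 < c) by (apply Rinv_0_lt_compat; lra).
  assert (0 < c * (z * z - z0 * z0)) by (apply Rmult_lt_0_compat; nra).
  nra.
Qed.

Lemma norm_gt_twice_sqrt n x R2 :
  norm n x > 2 * sqrt R2 -> 0 <= R2 -> 4 * R2 < inner n x x.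
Proof.
  intros Hx HR2. unfold norm in Hx.
  replace (2 * sqrt R2) with (sqrt (4 * R2)) in Hx.
  - exact (sqrt_lt_0_alt _ _ Hx).
  - rewrite sqrt_mult by lra. replace 4 with (2 * 2) by ring. rewrite sqrt_square; lra.
Qed.

Theorem proposition4p16 (n : nat) (hn : (2 <= n)%nat) :
  stable_region n (fun _ => 0)
    (fun x => norm n x >
       2 * sqrt (INR (n + 2) * (sqrt (INR (3 * n + 2) / INR (n + 2)) - 1))).
Proof.
  assert (hn1 : (1 <= n)%nat) by lia.
  assert (HN : 0 <= INR n) by apply pos_INR.
  exists (radial n (F n)), (radial_grad n (F1 n)), (radial_hess n (F1 n) (F2 n)).
  split.
  - apply radial_C2; [exact (F_deriv n hn1) | exact (F1_deriv n hn1) | exact (F2_cont n hn1)].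
  - intros x _ Hx. split.
    + rewrite Lop_radial. pose proof (F_ode n hn1 (inner n x x)). lra.
    + replace (INR (n + 2)) with (INR n + 2) in Hx by (rewrite plus_INR; simpl; ring).
      replace (INR (3 * n + 2)) with (3 * INR n + 2) in Hx
        by (rewrite plus_INR, mult_INR; simpl; ring).
      assert (Hthr : 0 <= (INR n + 2) * (sqrt ((3 * INR n + 2) / (INR n + 2)) - 1)).
      { pose proof (sqrt_ratio_ge1 (INR n) HN). apply Rmult_le_pos; lra. }
      unfold radial.
      eapply Rlt_le_trans; [|apply (F_ge_quadratic n hn1), inner_nonneg].
      apply quadratic_pos_beyond_root; [exact HN|].
      exact (norm_gt_twice_sqrt n x _ Hx Hthr).
Qed.
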